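(* Let $\mathbb{C}$ be a category of interest and let $A$ be an object of $\mathbb{C}$. Then $A$ has an actor in $\mathbb{C}$ if and only if the semidirect product $\mathfrak{B}(A)\ltimes A$ (formed with respect to the canonical action of $\mathfrak{B}(A)$ on $A$) is an object of $\mathbb{C}$. If this is the case, then $d:A\to\mathfrak{B}(A)$ is an actor of $A$, i.e. $\mathrm{Actor}(A)=\mathfrak{B}(A)$.
   Context: Category of interest. A category of groups with operations is a variety of universal algebras with a set of operations $\Omega=\Omega_0\cup\Omega_1\cup\Omega_2$ ($\Omega_i$ = set of $i$-ary operations) and a set of identities $\mathbb{E}$ such that: $\mathbb{E}$ contains the group laws; the group operations, written additively $0,-,+$ (addition not necessarily commutative), lie in $\Omega_0,\Omega_1,\Omega_2$ respectively, and $\Omega_0=\{0\}$; putting $\Omega_2'=\Omega_2\setminus\{+\}$ and $\Omega_1'=\Omega_1\setminus\{-\}$, whenever $*\in\Omega_2'$ also $*^\circ\in\Omega_2'$, where $x*^\circ y=y*x$; $\mathbb{E}$ contains $x*(y+z)=x*y+x*z$ for each $*\in\Omega_2'$, and $\omega(x+y)=\omega(x)+\omega(y)$, $\omega(x)*y=\omega(x*y)$ for each $\omega\in\Omega_1'$, $*\in\Omega_2'$. A category of interest $\mathbb{C}=(\Omega,\mathbb{E})$ is such a variety which also satisfies: (Axiom 1) $x_1+(x_2*x_3)=(x_2*x_3)+x_1$ for each $*\in\Omega_2'$; (Axiom 2) for each ordered pair $( *,\bar* )\in\Omega_2'\times\Omega_2'$ there is a word $W$ with $(x_1*x_2)\bar*x_3=W\big(x_1(x_2x_3),x_1(x_3x_2),(x_2x_3)x_1,(x_3x_2)x_1,x_2(x_1x_3),x_2(x_3x_1),(x_1x_3)x_2,(x_3x_1)x_2\big)$,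 each juxtaposition standing for some operation in $\Omega_2'$; the right-hand side is denoted $W(x_1,x_2;x_3;*,\bar* )$. Let $\mathbb{E}_G\subseteq\mathbb{E}$ consist of the group laws together with the identities $x*(y+z)=x*y+x*z$, $\omega(x+y)=\omega(x)+\omega(y)$, $\omega(x)*y=\omega(x*y)$, and let $\mathbb{C}_G$ be the variety $(\Omega,\mathbb{E}_G)$; $\mathbb{C}$ is a full subcategory of $\mathbb{C}_G$. Actions. For objects $A,B$ of $\mathbb{C}_G$, a set of actions of $B$ on $A$ is a family of maps $B\times A\to A$, $(b,a)\mapsto b\cdot a$ and $(b,a)\mapsto b*a$ for each $*\in\Omega_2'$ (one writes $a*b:=b*^\circ a$). Let $\mathcal V$ be $\mathbb{C}$ or $\mathbb{C}_G$. A split extension $0\to A\to E\xrightarrow{p}B\to 0$ in $\mathcal V$ ($p$ surjective with kernel $A$, and a morphism $s$ with $ps=1_B$) induces the actions $b\cdot a=s(b)+a-s(b)$, $b*a=s(b)*a$; actions arising in this way are called derived actions in $\mathcal V$. Given a set of actions, $B\ltimes A$ is the $\Omega$-algebra on the set $B\times A$ with $(b',a')+(b,a)=(b'+b,a'+b'\cdot a)$ and $(b',a')*(b,a)=(b'*b,\ a'*a+a'*b+b'*a)$ for $*\in\Omega_2'$; for $A,B\in\mathcal V$, a set of actions is a set of derived actions in $\mathcal V$ iff $B\ltimes A\in\mathcal V$. Crossed modules and actors. A crossed module in $\mathcal V$ is a morphism $\partial:C_1\to C_0$ in $\mathcal V$ together with a derived action of $C_0$ on $C_1$ in $\mathcal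 V$ such that for all $r\in C_0$, $c,c'\in C_1$, $*\in\Omega_2'$: $\partial(r\cdot c)=r+\partial(c)-r$; $\partial(c)\cdot c'=c+c'-c$; $\partial(c)*c'=c*c'$; $\partial(r*c)=r*\partial(c)$ and $\partial(c*r)=\partial(c)*r$. For $A\in\mathbb{C}$, an actor of $A$ is a crossed module $\partial:A\to\mathrm{Actor}(A)$ in $\mathbb{C}$ such that for every $C\in\mathbb{C}$ and every derived action of $C$ on $A$ in $\mathbb{C}$ there is a unique morphism $\varphi:C\to\mathrm{Actor}(A)$ in $\mathbb{C}$ with $c\cdot a=\varphi(c)\cdot a$ and $c*a=\varphi(c)*a$ for all $c\in C$, $a\in A$, $*\in\Omega_2'$. The object $\mathfrak{B}(A)$. Fix $A\in\mathbb{C}$ and let $(B_j)_{j\in J}$ range over all objects of $\mathbb{C}$ equipped with a derived action on $A$ in $\mathbb{C}$ (one index for each split extension of $A$ in $\mathbb{C}$; the same object may occur with different actions). Consider families $x$ of maps $A\to A$ consisting of a map $a\mapsto x\cdot a$ and maps $a\mapsto x*a$ ($*\in\Omega_2'$). For $b\in B_j$ let $\mathbf{b}$ be the family $a\mapsto b\cdot a$, $a\mapsto b*a$, and let $\mathbb{B}$ be the set of all such $\mathbf b$. Operations on families: for $\mathbf{b}_i,\mathbf{b}_k\in\mathbb{B}$ and $*\in\Omega_2'$, $(\mathbf b_i*\mathbf b_k)\cdot a=a$ and $(\mathbf b_i*\mathbf b_k)\bar*a=W(b_i,b_k;a;*,\bar* )$ for $\bar*\in\Omega_2'$ (the Axiom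 2 word, each of whose terms involves only one element of $B_i$ or $B_k$ and one element of $A$ and is evaluated through the given actions), iterated products being defined inductively in the same way via Axiom 2; $(x+y)\cdot a=x\cdot(y\cdot a)$ and $(x+y)*a=x*a+y*a$; for $\omega\in\Omega_1'$, $\omega(\mathbf b_k)$ is the family of $\omega(b_k)\in B_k$, $\omega(x*y)=\omega(x)*y$, and $\omega$ is additive; $(-\mathbf b_k)\cdot a=(-b_k)\cdot a$, $(-x)*a=-(x*a)$, $(-x)\cdot a=a$ when $x$ is a product, and $-(x_1+\dots+x_n)=-x_n-\dots-x_1$. $\mathfrak{B}(A)$ is the set of all families obtained from $\mathbb{B}$ by iterating these operations, modulo the equivalence $x\sim y$ iff $x\cdot a=y\cdot a$, $x*a=y*a$ and $(\omega_1\cdots\omega_n x)\cdot a=(\omega_1\cdots\omega_n y)\cdot a$ for all $a\in A$, $*\in\Omega_2'$, $n\ge1$, $\omega_1,\dots,\omega_n\in\Omega_1'$. It is an $\Omega$-algebra and acts canonically on $A$ by $(x,a)\mapsto x\cdot a$, $(x,a)\mapsto x*a$. The map $d:A\to\mathfrak{B}(A)$ sends $a$ to the family $d(a)\cdot a'=a+a'-a$, $d(a)*a'=a*a'$. *)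

From Stdlib Require Import List ClassicalEpsilon.
Import ListNotations.
Set Implicit Arguments.

(* Omega_0 = {0}, Omega_1 = {-} + op1, Omega_2 = {+} + op2.
   [flip o] is the operation o° (x o° y = y o x), required to lie in op2. *)
Record signature := Signature {
  op1 : Type;
  op2 : Type;
  flip : op2 -> op2 }.

Inductive term (S : signature) : Type :=
| tvar : nat -> term S
| tzero : term S
| tneg : term S -> term S
| tadd : term S -> term S -> term S
| tun : op1 S -> term S -> term S
| tbin : op2 S -> term S -> term S -> term S.
Arguments tzero {S}.

Record alg (S : signature) := Alg {
  car :> Type;
  azero : car;
  aneg : car -> car;
  aadd : car -> car -> car;
  aun : op1 S -> car -> car;
  abin : op2 S -> car -> car -> car }.
Arguments azero {S a}.
Arguments aneg {S a}.
Arguments aadd {S a}.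
Arguments aun {S a}.
Arguments abin {S a}.

Fixpoint teval (S : signature) (A : alg S) (v : nat -> A) (t : term S) : A :=
  match t with
  | tvar _ n => v n
  | tzero => azero
  | tneg t => aneg (teval A v t)
  | tadd t u => aadd (teval A v t) (teval A v u)
  | tun w t => aun w (teval A v t)
  | tbin o t u => abin o (teval A v t) (teval A v u)
  end.
Arguments teval {S} A v t.

Definition holds (S : signature) (A : alg S) (e : term S * term S) : Prop :=
  forall v : nat -> A, teval A v (fst e) = teval A v (snd e).

Definition models (S : signature) (E : term S * term S -> Prop) (A : alg S) : Prop :=
  forall e, E e -> holds A e.

Definition x1 {S} : term S := tvar S 0.
Definition x2 {S} : term S := tvar S 1.
Definition x3 {S} : term S := tvar S 2.

Inductive EG_ident (S : signature) : term S * term S -> Prop :=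
| eg_assoc : EG_ident (tadd (tadd x1 x2) x3, tadd x1 (tadd x2 x3))
| eg_zl : EG_ident (tadd tzero x1, x1)
| eg_zr : EG_ident (tadd x1 tzero, x1)
| eg_nl : EG_ident (tadd (tneg x1) x1, tzero)
| eg_nr : EG_ident (tadd x1 (tneg x1), tzero)
| eg_distr : forall o, EG_ident (tbin o x1 (tadd x2 x3), tadd (tbin o x1 x2) (tbin o x1 x3))
| eg_unadd : forall w, EG_ident (tun w (tadd x1 x2), tadd (tun w x1) (tun w x2))
| eg_unbin : forall w o, EG_ident (tbin o (tun w x1) x2, tun w (tbin o x1 x2)).

(* The eight monomial shapes of Axiom 2, with outer operation p and inner q:
   Sh1: x1 p (x2 q x3)   Sh2: x1 p (x3 q x2)   Sh3: (x2 q x3) p x1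
   Sh4: (x3 q x2) p x1   Sh5: x2 p (x1 q x3)   Sh6: x2 p (x3 q x1)
   Sh7: (x1 q x3) p x2   Sh8: (x3 q x1) p x2 *)
Inductive shape := Sh1 | Sh2 | Sh3 | Sh4 | Sh5 | Sh6 | Sh7 | Sh8.

Inductive wterm (S : signature) : Type :=
| watom : shape -> op2 S -> op2 S -> wterm S
| wzero : wterm S
| wneg : wterm S -> wterm S
| wadd : wterm S -> wterm S -> wterm S
| wun : op1 S -> wterm S -> wterm S.
Arguments wzero {S}.

Definition atom_term (S : signature) (sh : shape) (p q : op2 S) : term S :=
  match sh with
  | Sh1 => tbin p x1 (tbin q x2 x3)
  | Sh2 => tbin p x1 (tbin q x3 x2)
  | Sh3 => tbin p (tbin q x2 x3) x1
  | Sh4 => tbin p (tbin q x3 x2) x1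
  | Sh5 => tbin p x2 (tbin q x1 x3)
  | Sh6 => tbin p x2 (tbin q x3 x1)
  | Sh7 => tbin p (tbin q x1 x3) x2
  | Sh8 => tbin p (tbin q x3 x1) x2
  end.

Fixpoint wterm_term (S : signature) (W : wterm S) : term S :=
  match W with
  | watom _ sh p q => atom_term S sh p q
  | wzero => tzero
  | wneg W => tneg (wterm_term W)
  | wadd W V => tadd (wterm_term W) (wterm_term V)
  | wun w W => tun w (wterm_term W)
  end.

Record CI := {
  ci_sig :> signature;
  ci_E : term ci_sig * term ci_sig -> Prop;
  ci_EG : forall e, EG_ident e -> ci_E e;
  ci_flip : forall o, ci_E (tbin (flip ci_sig o) x1 x2, tbin o x2 x1);
  ci_ax1 : forall (A : alg ci_sig), models ci_E A ->
     forall o, holds A (tadd x1 (tbin o x2 x3), tadd (tbin o x2 x3) x1);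
  (* Axiom 2, with a chosen word W(x1,x2;x3;*,*bar) for each pair *)
  ci_W : op2 ci_sig -> op2 ci_sig -> wterm ci_sig;
  ci_ax2 : forall (A : alg ci_sig), models ci_E A ->
     forall o ob, holds A (tbin ob (tbin o x1 x2) x3, wterm_term (ci_W o ob)) }.

Definition inC (C : CI) (A : alg C) : Prop := models (ci_E C) A.
Arguments inC {C} A.

Definition morph (S : signature) (A B : alg S) (f : A -> B) : Prop :=
  f azero = azero /\ (forall x, f (aneg x) = aneg (f x)) /\
  (forall x y, f (aadd x y) = aadd (f x) (f y)) /\
  (forall w x, f (aun w x) = aun w (f x)) /\
  (forall o x y, f (abin o x y) = abin o (f x) (f y)).
Arguments morph {S A B} f.

(* act_dot b a = b . a ;  act_op o b a = b o a  (and a o b := b o° a). *)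
Record action (S : signature) (B A : alg S) := Action {
  act_dot : B -> A -> A;
  act_op : op2 S -> B -> A -> A }.
Arguments act_dot {S B A}.
Arguments act_op {S B A}.

Definition semidirect (S : signature) (B A : alg S) (act : action B A) : alg S :=
  @Alg S (B * A)%type
    (azero, azero)
    (fun p => (aneg (fst p), aneg (act_dot act (aneg (fst p)) (snd p))))
    (fun p q => (aadd (fst p) (fst q), aadd (snd p) (act_dot act (fst p) (snd q))))
    (fun w p => (aun w (fst p), aun w (snd p)))
    (fun o p q => (abin o (fst p) (fst q),
                   aadd (aadd (abin o (snd p) (snd q)) (act_op act (flip S o) (fst q) (snd p)))
                        (act_op act o (fst p) (snd q)))).
Arguments semidirect {S B A} act.

Definition derived (C : CI) (B A : alg C) (act : action B A) : Prop :=
  exists (E : alg C), inC E /\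
  exists (p : E -> B) (i : A -> E) (s : B -> E),
    morph p /\ morph i /\ morph s /\
    (forall a a', i a = i a' -> a = a') /\
    (forall e, p e = azero <-> exists a, i a = e) /\
    (forall b, p (s b) = b) /\
    (forall b a, i (act_dot act b a) = aadd (aadd (s b) (i a)) (aneg (s b))) /\
    (forall o b a, i (act_op act o b a) = abin o (s b) (i a)).
Arguments derived {C B A} act.

Definition xmod (C : CI) (C1 C0 : alg C) (d : C1 -> C0) (act : action C0 C1) : Prop :=
  inC C1 /\ inC C0 /\ morph d /\ derived act /\
  (forall r c, d (act_dot act r c) = aadd (aadd r (d c)) (aneg r)) /\
  (forall c c', act_dot act (d c) c' = aadd (aadd c c') (aneg c)) /\
  (forall o c c', act_op act o (d c) c' = abin o c c') /\
  (forall o r c, d (act_op act o r c) = abin o r (d c)) /\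
  (forall o c r, d (act_op act (flip C o) r c) = abin o (d c) r).
Arguments xmod {C C1 C0} d act.

Definition is_actor (C : CI) (A Act : alg C) (d : A -> Act) (act : action Act A) : Prop :=
  xmod d act /\
  forall (D : alg C) (actD : action D A), inC D -> derived actD ->
    exists! phi : D -> Act, morph phi /\
      (forall c a, act_dot actD c a = act_dot act (phi c) a) /\
      (forall o c a, act_op actD o c a = act_op act o (phi c) a).
Arguments is_actor {C A Act} d act.

Definition has_actor (C : CI) (A : alg C) : Prop :=
  exists (Act : alg C) (d : A -> Act) (act : action Act A), is_actor d act.
Arguments has_actor {C} A.

(* The data of an element x of B(A): for each list [w1;..;wn] of unary
   operations the map a |-> (w1 (.. (wn x))) . a, and for each binary
   operation o the map a |-> x o a. Two elements are identified iff these
   data coincide (this is exactly the equivalence ~ of the paper). *)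
Definition Sig (C : CI) (A : alg C) : Type :=
  ((list (op1 C) -> A -> A) * (op2 C -> A -> A))%type.
Arguments Sig {C} A.

Definition omegas (S : signature) (B : alg S) (l : list (op1 S)) (b : B) : B :=
  fold_right (fun w b => aun w b) b l.
Arguments omegas {S B} l b.

(* Formal expressions built from the elements b of all B_j (objects of C with
   a derived action on A in C) by the operations of B(A). *)
Inductive Expr (C : CI) (A : alg C) : Type :=
| egen : forall (B : alg C) (act : action B A), inC B -> derived act -> B -> Expr C A
| ezero : Expr C A
| eadd : Expr C A -> Expr C A -> Expr C A
| eneg : Expr C A -> Expr C A
| eun : op1 C -> Expr C A -> Expr C A
| ebin : op2 C -> Expr C A -> Expr C A -> Expr C A.
Arguments Expr {C} A.
Arguments ezero {C A}.
Arguments eadd {C A}.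
Arguments eneg {C A}.
Arguments eun {C A}.
Arguments ebin {C A}.
Arguments egen {C A B}.

Definition genSig (C : CI) (A B : alg C) (act : action B A) (b : B) : Sig A :=
  (fun l a => act_dot act (omegas l b) a, fun o a => act_op act o b a).
Arguments genSig {C A B} act b.

Definition zeroSig (C : CI) (A : alg C) : Sig A :=
  (fun _ a => a, fun _ _ => azero).
Arguments zeroSig {C} A.

Definition addSig (C : CI) (A : alg C) (X Y : Sig A) : Sig A :=
  (fun l a => fst X l (fst Y l a), fun o a => aadd (snd X o a) (snd Y o a)).
Arguments addSig {C A} X Y.

(* Evaluation of an Axiom-2 word W(x,y;a) through the star-maps of x and y. *)
Definition atom_eval (C : CI) (A : alg C) (sh : shape) (p q : op2 C)
  (SX SY : op2 C -> A -> A) (a : A) : A :=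
  match sh with
  | Sh1 => SX p (SY q a)
  | Sh2 => SX p (SY (flip C q) a)
  | Sh3 => SX (flip C p) (SY q a)
  | Sh4 => SX (flip C p) (SY (flip C q) a)
  | Sh5 => SY p (SX q a)
  | Sh6 => SY p (SX (flip C q) a)
  | Sh7 => SY (flip C p) (SX q a)
  | Sh8 => SY (flip C p) (SX (flip C q) a)
  end.
Arguments atom_eval {C A} sh p q SX SY a.

Fixpoint weval (C : CI) (A : alg C) (W : wterm C)
  (SX SY : op2 C -> A -> A) (a : A) : A :=
  match W with
  | watom _ sh p q => atom_eval sh p q SX SY a
  | wzero => azero
  | wneg W => aneg (weval C A W SX SY a)
  | wadd W V => aadd (weval C A W SX SY a) (weval C A V SX SY a)
  | wun w W => aun w (weval C A W SX SY a)
  end.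
Arguments weval {C} A W SX SY a.

Definition binSig (C : CI) (A : alg C) (o : op2 C) (X Y : Sig A) : Sig A :=
  (fun _ a => a, fun ob a => weval A (ci_W C o ob) (snd X) (snd Y) a).
Arguments binSig {C A} o X Y.

(* sigU l x = data of w_l(x); negU l x = data of w_l(-x). *)
Fixpoint sigU (C : CI) (A : alg C) (l : list (op1 C)) (x : Expr A) {struct x} : Sig A :=
  match x with
  | egen act _ _ b => genSig act (omegas l b)
  | ezero => zeroSig A
  | eadd x y => addSig (sigU l x) (sigU l y)
  | eneg x => negU l x
  | eun w x => sigU (l ++ [w]) x
  | ebin o x y => binSig o (sigU l x) (sigU nil y)
  end
with negU (C : CI) (A : alg C) (l : list (op1 C)) (x : Expr A) {struct x} : Sig A :=
  match x with
  | egen act _ _ b => genSig act (omegas l (aneg b))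
  | ezero => zeroSig A
  | eadd x y => addSig (negU l y) (negU l x)
  | eneg x => sigU l x
  | eun w x => negU (l ++ [w]) x
  | ebin o x y =>
      (fun _ a => a,
       fun ob a => aneg (snd (binSig o (sigU l x) (sigU nil y)) ob a))
  end.
Arguments sigU {C A} l x.
Arguments negU {C A} l x.

Definition sigE (C : CI) (A : alg C) (x : Expr A) : Sig A := sigU nil x.
Arguments sigE {C A} x.

(* Carrier of B(A): expressions modulo ~, represented by their data. *)
Definition Bcar (C : CI) (A : alg C) : Type := { s : Sig A | exists x : Expr A, sigE x = s }.
Arguments Bcar {C} A.

Definition mkB (C : CI) (A : alg C) (x : Expr A) : Bcar A :=
  exist _ (sigE x) (ex_intro _ x eq_refl).
Arguments mkB {C A} x.

Definition rep (C : CI) (A : alg C) (s : Bcar A) : Expr A :=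
  proj1_sig (constructive_indefinite_description _ (proj2_sig s)).
Arguments rep {C A} s.

Definition BA (C : CI) (A : alg C) : alg C :=
  @Alg C (Bcar A)
    (mkB ezero)
    (fun s => mkB (eneg (rep s)))
    (fun s t => mkB (eadd (rep s) (rep t)))
    (fun w s => mkB (eun w (rep s)))
    (fun o s t => mkB (ebin o (rep s) (rep t))).
Arguments BA {C} A.

Definition canon (C : CI) (A : alg C) : action (BA A) A :=
  @Action C (BA A) A (fun s a => fst (proj1_sig s) nil a)
                     (fun o s a => snd (proj1_sig s) o a).
Arguments canon {C} A.

Definition dSig (C : CI) (A : alg C) (a : A) : Sig A :=
  (fun l a' => aadd (aadd (omegas l a) a') (aneg (omegas l a)),
   fun o a' => abin o a a').
Arguments dSig {C A} a.

(* If [A] has an actor [Act], every derived action on [A] factors uniquely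
   through [Act]; evaluating the formal expressions that generate [BA A] in
   [Act] shows that [y |-> data of y] maps [Act] onto [BA A].  Hence [BA A ⋉ A]
   is a homomorphic image of [Act ⋉ A], which embeds into the split extension
   defining the derived action of [Act], so it lies in C.  Conversely, if
   [BA A ⋉ A] lies in C it is itself a split extension, so the canonical action
   is derived; the crossed-module identities for [d] are then identities valid
   for every derived action, and a derived action of [D] on [A] factors through
   [BA A] by [c |-> data of c], uniquely since elements of [BA A] are their
   data. *)

From Stdlib Require Import List ClassicalEpsilon FunctionalExtensionality ProofIrrelevance.
Import ListNotations.
Set Implicit Arguments.

Definition val3 {X : Type} (x y z : X) : nat -> X :=
  fun n => match n with 0 => x | 1 => y | _ => z end.

Section GroupWithOperations.
Variables (C : CI) (X : alg C).
Hypothesis HX : inC X.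

Lemma add_assoc (x y z : X) : aadd (aadd x y) z = aadd x (aadd y z).
Proof. exact (HX _ (ci_EG C (eg_assoc C)) (val3 x y z)). Qed.

Lemma add_0_l (x : X) : aadd azero x = x.
Proof. exact (HX _ (ci_EG C (eg_zl C)) (val3 x x x)). Qed.

Lemma add_0_r (x : X) : aadd x azero = x.
Proof. exact (HX _ (ci_EG C (eg_zr C)) (val3 x x x)). Qed.

Lemma add_opp_diag_l (x : X) : aadd (aneg x) x = azero.
Proof. exact (HX _ (ci_EG C (eg_nl C)) (val3 x x x)). Qed.

Lemma add_opp_diag_r (x : X) : aadd x (aneg x) = azero.
Proof. exact (HX _ (ci_EG C (eg_nr C)) (val3 x x x)). Qed.

Lemma bin_add_distr_r o (x y z : X) : abin o x (aadd y z) = aadd (abin o x y) (abin o x z).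
Proof. exact (HX _ (ci_EG C (eg_distr C o)) (val3 x y z)). Qed.

Lemma un_add w (x y : X) : aun w (aadd x y) = aadd (aun w x) (aun w y).
Proof. exact (HX _ (ci_EG C (eg_unadd C w)) (val3 x y y)). Qed.

Lemma bin_un_l w o (x y : X) : abin o (aun w x) y = aun w (abin o x y).
Proof. exact (HX _ (ci_EG C (eg_unbin C w o)) (val3 x y y)). Qed.

Lemma bin_flip o (x y : X) : abin (flip C o) x y = abin o y x.
Proof. exact (HX _ (ci_flip C o) (val3 x y y)). Qed.

Lemma add_bin_comm o (x y z : X) : aadd x (abin o y z) = aadd (abin o y z) x.
Proof. exact (ci_ax1 C HX o (val3 x y z)). Qed.

Lemma bin_bin_word o ob (x y z : X) :
  abin ob (abin o x y) z = teval X (val3 x y z) (wterm_term (ci_W C o ob)).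
Proof. exact (ci_ax2 C HX o ob (val3 x y z)). Qed.

Lemma add_cancel_l (x y z : X) : aadd x y = aadd x z -> y = z.
Proof.
  intro E. rewrite <- (add_0_l y), <- (add_0_l z), <- (add_opp_diag_l x), !add_assoc, E.
  reflexivity.
Qed.

Lemma add_cancel_r (x y z : X) : aadd y x = aadd z x -> y = z.
Proof.
  intro E. rewrite <- (add_0_r y), <- (add_0_r z), <- (add_opp_diag_r x), <- !add_assoc, E.
  reflexivity.
Qed.

Lemma opp_unique (x y : X) : aadd x y = azero -> x = aneg y.
Proof. intro E. apply (add_cancel_r y). rewrite E, add_opp_diag_l. reflexivity. Qed.

Lemma opp_0 : aneg (azero : X) = azero.
Proof. symmetry. apply opp_unique, add_0_l. Qed.

Lemma opp_involutive (x : X) : aneg (aneg x) = x.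
Proof. symmetry. apply opp_unique, add_opp_diag_r. Qed.

Lemma opp_add_distr (x y : X) : aneg (aadd x y) = aadd (aneg y) (aneg x).
Proof.
  symmetry. apply opp_unique.
  rewrite add_assoc, <- (add_assoc (aneg x)), add_opp_diag_l, add_0_l, add_opp_diag_l.
  reflexivity.
Qed.

Lemma add_idempotent (x : X) : aadd x x = x -> x = azero.
Proof. intro E. apply (add_cancel_l x). rewrite E, add_0_r. reflexivity. Qed.

Lemma un_0 w : aun w (azero : X) = azero.
Proof. apply add_idempotent. rewrite <- un_add, add_0_l. reflexivity. Qed.

Lemma un_opp w (x : X) : aun w (aneg x) = aneg (aun w x).
Proof. apply opp_unique. rewrite <- un_add, add_opp_diag_l, un_0. reflexivity. Qed.

Lemma bin_0_r o (x : X) : abin o x azero = azero.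
Proof. apply add_idempotent. rewrite <- bin_add_distr_r, add_0_l. reflexivity. Qed.

Lemma bin_0_l o (x : X) : abin o azero x = azero.
Proof. rewrite <- bin_flip, bin_0_r. reflexivity. Qed.

Lemma bin_add_distr_l o (x y z : X) : abin o (aadd x y) z = aadd (abin o x z) (abin o y z).
Proof. rewrite <- (bin_flip o z (aadd x y)), bin_add_distr_r, !bin_flip. reflexivity. Qed.

Lemma bin_opp_l o (x y : X) : abin o (aneg x) y = aneg (abin o x y).
Proof. apply opp_unique. rewrite <- bin_add_distr_l, add_opp_diag_l, bin_0_l. reflexivity. Qed.

Lemma conj_bin o (y z x : X) : aadd (aadd (abin o y z) x) (aneg (abin o y z)) = x.
Proof. rewrite <- add_bin_comm, add_assoc, add_opp_diag_r, add_0_r. reflexivity. Qed.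

Lemma add_opp_cancel_l (x y : X) : aadd (aneg x) (aadd x y) = y.
Proof. rewrite <- add_assoc, add_opp_diag_l, add_0_l. reflexivity. Qed.

Lemma omegas_0 l : omegas l (azero : X) = azero.
Proof. induction l as [|w l IH]; simpl; [|rewrite IH, un_0]; reflexivity. Qed.

Lemma omegas_add l (x y : X) : omegas l (aadd x y) = aadd (omegas l x) (omegas l y).
Proof. induction l as [|w l IH]; simpl; [|rewrite IH, un_add]; reflexivity. Qed.

Lemma omegas_opp l (x : X) : omegas l (aneg x) = aneg (omegas l x).
Proof. induction l as [|w l IH]; simpl; [|rewrite IH, un_opp]; reflexivity. Qed.

Lemma omegas_bin l o (x y : X) : omegas l (abin o x y) = abin o (omegas l x) y.
Proof. induction l as [|w l IH]; simpl; [|rewrite IH, bin_un_l]; reflexivity. Qed.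

End GroupWithOperations.

Lemma omegas_app (S : signature) (X : alg S) l l' (x : X) :
  omegas (l ++ l') x = omegas l (omegas l' x).
Proof. apply fold_right_app. Qed.

Lemma morph_omegas (S : signature) (X Y : alg S) (f : X -> Y) l x :
  morph f -> f (omegas l x) = omegas l (f x).
Proof.
  intros (_ & _ & _ & Hun & _). induction l as [|w l IH]; simpl; [|rewrite Hun, IH]; reflexivity.
Qed.

Lemma morph_teval (S : signature) (X Y : alg S) (f : X -> Y) v t :
  morph f -> f (teval X v t) = teval Y (fun n => f (v n)) t.
Proof. intros (H0 & HN & HD & HU & HB). induction t; simpl; congruence. Qed.

Lemma inC_image (C : CI) (X Y : alg C) (f : X -> Y) :
  morph f -> (forall y, exists x, f x = y) -> inC X -> inC Y.
Proof.
  intros Hf Hs HX e He v.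
  destruct (choice (fun n x => f x = v n) (fun n => Hs (v n))) as [g Hg].
  replace v with (fun n => f (g n)) by (apply functional_extensionality; intro; apply Hg).
  rewrite <- !morph_teval by exact Hf. f_equal. apply HX, He.
Qed.

Lemma inC_preimage (C : CI) (X Y : alg C) (f : X -> Y) :
  morph f -> (forall x x', f x = f x' -> x = x') -> inC Y -> inC X.
Proof. intros Hf Hi HY e He v. apply Hi. rewrite !morph_teval by exact Hf. apply HY, He. Qed.

Lemma morph_weval (C : CI) (A Y : alg C) (HY : inC Y) (j : A -> Y) (Hj : morph j) (u v : Y)
  (SX SY : op2 C -> A -> A)
  (HSX : forall p a, j (SX p a) = abin p u (j a)) (HSY : forall p a, j (SY p a) = abin p v (j a))
  W a : j (weval A W SX SY a) = teval Y (val3 u v (j a)) (wterm_term W).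
Proof.
  destruct Hj as (H0 & HN & HD & HU & HB).
  induction W as [sh p q| |W IH|W1 IH1 W2 IH2|w W IH]; simpl.
  - destruct sh; simpl; rewrite ?HSX, ?HSY, ?HSX, ?(bin_flip HY); reflexivity.
  - exact H0.
  - rewrite HN, IH. reflexivity.
  - rewrite HD, IH1, IH2. reflexivity.
  - rewrite HU, IH. reflexivity.
Qed.

Section DerivedAction.
Variables (C : CI) (B A : alg C) (act : action B A).
Hypothesis Hd : derived act.

Local Ltac embed_in_extension :=
  destruct Hd as (E & HE & p & i & s & Hp & Hi & Hs & Hinj & Hker & Hps & Hdot & Hop);
  pose proof Hi as Hi_morph; pose proof Hs as Hs_morph;
  destruct Hi as (Hi0 & HiN & HiD & HiU & HiB); destruct Hs as (Hs0 & HsN & HsD & HsU & HsB);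
  apply Hinj.

Lemma dact_dot_0_l a : act_dot act azero a = a.
Proof.
  embed_in_extension. rewrite Hdot, Hs0, (opp_0 HE), (add_0_l HE), (add_0_r HE). reflexivity.
Qed.

Lemma dact_dot_add_l b b' a : act_dot act (aadd b b') a = act_dot act b (act_dot act b' a).
Proof.
  embed_in_extension. rewrite !Hdot, HsD, (opp_add_distr HE), !(add_assoc HE). reflexivity.
Qed.

Lemma dact_dot_0_r b : act_dot act b azero = azero.
Proof.
  embed_in_extension. rewrite Hdot, Hi0, (add_0_r HE), (add_opp_diag_r HE). reflexivity.
Qed.

Lemma dact_dot_add_r b a a' :
  act_dot act b (aadd a a') = aadd (act_dot act b a) (act_dot act b a').
Proof.
  embed_in_extension. rewrite HiD, !Hdot, HiD, !(add_assoc HE), (add_opp_cancel_l HE). reflexivity.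
Qed.

Lemma dact_dot_un w b a : aun w (act_dot act b a) = act_dot act (aun w b) (aun w a).
Proof.
  embed_in_extension. rewrite HiU, !Hdot, !(un_add HE), (un_opp HE), HsU, HiU. reflexivity.
Qed.

Lemma dact_op_0_l o a : act_op act o azero a = azero.
Proof. embed_in_extension. rewrite Hop, Hs0, (bin_0_l HE), Hi0. reflexivity. Qed.

Lemma dact_op_add_l o b b' a :
  act_op act o (aadd b b') a = aadd (act_op act o b a) (act_op act o b' a).
Proof. embed_in_extension. rewrite Hop, HiD, !Hop, HsD, (bin_add_distr_l HE). reflexivity. Qed.

Lemma dact_op_opp_l o b a : act_op act o (aneg b) a = aneg (act_op act o b a).
Proof. embed_in_extension. rewrite Hop, HiN, Hop, HsN, (bin_opp_l HE). reflexivity. Qed.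

Lemma dact_op_un_l o w b a : act_op act o (aun w b) a = aun w (act_op act o b a).
Proof. embed_in_extension. rewrite Hop, HiU, Hop, HsU, (bin_un_l HE). reflexivity. Qed.

Lemma dact_op_central o b a y : aadd y (act_op act o b a) = aadd (act_op act o b a) y.
Proof. embed_in_extension. rewrite !HiD, Hop, (add_bin_comm HE). reflexivity. Qed.

Lemma dact_conj_op o b a y :
  aadd (aadd (act_op act o b a) y) (aneg (act_op act o b a)) = y.
Proof.
  embed_in_extension. rewrite !HiD, HiN, Hop, <- (add_bin_comm HE), (add_assoc HE),
    (add_opp_diag_r HE), (add_0_r HE).
  reflexivity.
Qed.

Lemma dact_dot_omegas_bin l o b b' a : act_dot act (omegas l (abin o b b')) a = a.
Proof.
  embed_in_extension.
  rewrite Hdot, (morph_omegas l _ Hs_morph), HsB, (omegas_bin HE), (conj_bin HE).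
  reflexivity.
Qed.

Lemma dact_dot_bin_l o b c x : abin o (act_dot act b c) x = abin o c x.
Proof.
  embed_in_extension.
  rewrite !HiB, Hdot, !(bin_add_distr_l HE), (bin_opp_l HE),
    (add_bin_comm HE o (abin o (s b) (i x))).
  rewrite (add_assoc HE), (add_opp_diag_r HE), (add_0_r HE). reflexivity.
Qed.

Lemma dact_op_bin_word o ob b b' a :
  act_op act ob (abin o b b') a =
  weval A (ci_W C o ob) (fun p => act_op act p b) (fun p => act_op act p b') a.
Proof.
  embed_in_extension. rewrite Hop, HsB, (bin_bin_word HE).
  symmetry. apply (morph_weval HE Hi_morph); intros; apply Hop.
Qed.

Lemma dact_bin_op_word_l o ob r c x :
  abin ob (act_op act o r c) x =
  weval A (ci_W C o ob) (fun p => act_op act p r) (fun p => abin p c) x.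
Proof.
  embed_in_extension. rewrite HiB, Hop, (bin_bin_word HE).
  symmetry. apply (morph_weval HE Hi_morph); intros; [apply Hop | apply HiB].
Qed.

Lemma dact_bin_op_word_r o ob r c x :
  abin ob (act_op act (flip C o) r c) x =
  weval A (ci_W C o ob) (fun p => abin p c) (fun p => act_op act p r) x.
Proof.
  embed_in_extension. rewrite HiB, Hop, (bin_flip HE), (bin_bin_word HE).
  symmetry. apply (morph_weval HE Hi_morph); intros; [apply HiB | apply Hop].
Qed.

Lemma dact_dot_omegas l b a :
  omegas l (act_dot act b a) = act_dot act (omegas l b) (omegas l a).
Proof. induction l as [|w l IH]; simpl; [|rewrite IH, dact_dot_un]; reflexivity. Qed.

Lemma dact_op_omegas l o b a : omegas l (act_op act o b a) = act_op act o (omegas l b) a.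
Proof. induction l as [|w l IH]; simpl; [|rewrite IH, dact_op_un_l]; reflexivity. Qed.

Lemma dact_dot_opp_r (HA : inC A) b a : act_dot act b (aneg a) = aneg (act_dot act b a).
Proof.
  apply (opp_unique HA). rewrite <- dact_dot_add_r, (add_opp_diag_l HA), dact_dot_0_r.
  reflexivity.
Qed.

Hypothesis HB : inC B.

Lemma dact_dot_opp_cancel_l b a : act_dot act (aneg b) (act_dot act b a) = a.
Proof. rewrite <- dact_dot_add_l, (add_opp_diag_l HB), dact_dot_0_l. reflexivity. Qed.

Lemma dact_dot_opp_cancel_r b a : act_dot act b (act_dot act (aneg b) a) = a.
Proof. rewrite <- dact_dot_add_l, (add_opp_diag_r HB), dact_dot_0_l. reflexivity. Qed.

End DerivedAction.

Lemma derived_semidirect_inC (C : CI) (B A : alg C) (act : action B A) :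
  derived act -> inC (semidirect act).
Proof.
  intros (E & HE & p & i & s & Hp & Hi & Hs & Hinj & Hker & Hps & Hdot & Hop).
  assert (HB : inC B) by exact (inC_image Hp (fun b => ex_intro _ (s b) (Hps b)) HE).
  destruct Hi as (Hi0 & HiN & HiD & HiU & HiB); destruct Hs as (Hs0 & HsN & HsD & HsU & HsB).
  apply (@inC_preimage C (semidirect act) E (fun q => aadd (i (snd q)) (s (fst q)))); auto.
  - repeat split; [| intros [b a] | intros [b a] [b' a'] | intros w [b a] | intros o [b a] [b' a']];
      simpl.
    + rewrite Hi0, Hs0, (add_0_l HE). reflexivity.
    + rewrite HiN, Hdot, HsN, (opp_involutive HE), !(opp_add_distr HE), !(opp_involutive HE),
        !(add_assoc HE), (add_opp_diag_r HE), (add_0_r HE). reflexivity.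
    + rewrite HiD, Hdot, HsD, !(add_assoc HE), (add_opp_cancel_l HE). reflexivity.
    + rewrite HiU, HsU, (un_add HE). reflexivity.
    + rewrite !HiD, !HiB, !Hop, HsB, (bin_flip HE), (bin_add_distr_l HE), !(bin_add_distr_r HE),
        !(add_assoc HE). reflexivity.
  - intros [b a] [b' a'] Heq; simpl in Heq.
    assert (Hpi : forall a0, p (i a0) = azero) by (intro a0; apply Hker; exists a0; reflexivity).
    destruct Hp as (_ & _ & HpD & _).
    pose proof (f_equal p Heq) as Hb. rewrite !HpD, !Hpi, !Hps, !(add_0_l HB) in Hb. subst b'.
    apply (add_cancel_r HE), Hinj in Heq. subst a'. reflexivity.
Qed.

Lemma semidirect_inC_l (C : CI) (B A : alg C) (act : action B A) :
  inC (semidirect act) -> inC B.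
Proof.
  apply (@inC_image C (semidirect act) B fst).
  - repeat split.
  - intro b. exists (b, azero). reflexivity.
Qed.

(* The two normalisations are not implied by [inC (semidirect act)]: a nonzero
   constant [act_op] can cancel out of the product formula. *)
Lemma semidirect_derived (C : CI) (B A : alg C) (act : action B A) (HA : inC A) :
  inC (semidirect act) ->
  (forall a, act_dot act azero a = a) -> (forall o a, act_op act o azero a = azero) ->
  derived act.
Proof.
  intros HS Hdot0 Hop0. pose proof (semidirect_inC_l HS) as HB.
  assert (Hdot_r : forall b, act_dot act b azero = azero).
  { intro b. pose proof (f_equal snd (add_0_r HS (b, azero))) as E; simpl in E.
    rewrite (add_0_l HA) in E. exact E. }
  assert (Hop_r : forall o b, act_op act o b azero = azero).
  { intros o b. pose proof (f_equal snd (bin_0_r HS o (b, azero))) as E; simpl in E.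
    rewrite (bin_0_r HA), Hop0, !(add_0_l HA) in E. exact E. }
  exists (semidirect act). split; [exact HS|].
  exists fst, (fun a => (azero, a)), (fun b => (b, azero)).
  repeat split; intros; simpl;
    repeat progress rewrite ?(opp_0 HA), ?(opp_0 HB), ?Hdot0, ?Hdot_r, ?Hop0, ?Hop_r,
      ?(add_0_l HA), ?(add_0_l HB), ?(add_0_r HA), ?(add_0_r HB), ?(add_opp_diag_r HB),
      ?(un_0 HA), ?(un_0 HB), ?(bin_0_l HA), ?(bin_0_l HB), ?(bin_0_r HA), ?(bin_0_r HB);
    try reflexivity.
  - congruence.
  - destruct e as [b a]; simpl in *; subst. exists a. reflexivity.
  - match goal with H : exists _, _ |- _ => destruct H as [a E] end. subst. reflexivity.
Qed.

Definition action_map (S : signature) (B B' A : alg S) (act : action B A) (act' : action B' A)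
  (f : B -> B') : Prop :=
  morph f /\ (forall b a, act_dot act' (f b) a = act_dot act b a) /\
  (forall o b a, act_op act' o (f b) a = act_op act o b a).

Lemma semidirect_map_morph (S : signature) (B B' A : alg S) (act : action B A)
  (act' : action B' A) (f : B -> B') :
  action_map act act' f -> morph (fun q : semidirect act => (f (fst q), snd q) : semidirect act').
Proof.
  intros ((H0 & HN & HD & HU & HB) & Hdot & Hop).
  repeat split; [| intros [b a] | intros [b a] [b' a'] | intros w [b a] | intros o [b a] [b' a']];
    simpl; rewrite ?H0, <- ?HN, <- ?HD, <- ?HU, <- ?HB, ?Hdot, ?Hop; reflexivity.
Qed.

Lemma Sig_ext (C : CI) (A : alg C) (X Y : Sig A) :
  (forall l a, fst X l a = fst Y l a) -> (forall o a, snd X o a = snd Y o a) -> X = Y.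
Proof.
  destruct X as [X1 X2], Y as [Y1 Y2]; simpl; intros H1 H2.
  f_equal; do 2 (apply functional_extensionality; intro); auto.
Qed.

Section GeneratorData.
Variables (C : CI) (B A : alg C) (act : action B A).
Hypotheses (HB : inC B) (Hd : derived act).

Lemma genSig_0 : genSig act azero = zeroSig A.
Proof.
  apply Sig_ext; simpl; intros.
  - rewrite (omegas_0 HB), (dact_dot_0_l Hd). reflexivity.
  - apply (dact_op_0_l Hd).
Qed.

Lemma genSig_add u v : genSig act (aadd u v) = addSig (genSig act u) (genSig act v).
Proof.
  apply Sig_ext; simpl; intros.
  - rewrite (omegas_add HB), (dact_dot_add_l Hd). reflexivity.
  - apply (dact_op_add_l Hd).
Qed.

Lemma genSig_bin o u v : genSig act (abin o u v) = binSig o (genSig act u) (genSig act v).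
Proof.
  apply Sig_ext; simpl; intros.
  - apply (dact_dot_omegas_bin Hd).
  - apply (dact_op_bin_word Hd).
Qed.

Lemma genSig_opp_bin o u v :
  genSig act (aneg (abin o u v)) =
  (fun _ a => a, fun ob a => aneg (snd (binSig o (genSig act u) (genSig act v)) ob a)).
Proof.
  apply Sig_ext; simpl; intros.
  - rewrite <- (bin_opp_l HB). apply (dact_dot_omegas_bin Hd).
  - rewrite (dact_op_opp_l Hd), (dact_op_bin_word Hd). reflexivity.
Qed.

Lemma genSig_un_congr w u u' :
  genSig act u = genSig act u' -> genSig act (aun w u) = genSig act (aun w u').
Proof.
  intro E. apply Sig_ext; simpl; intros l a.
  - change (act_dot act (omegas l (omegas [w] u)) a = act_dot act (omegas l (omegas [w] u')) a).
    rewrite <- !omegas_app. exact (equal_f (equal_f (f_equal fst E) _) a).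
  - rewrite !(dact_op_un_l Hd). f_equal. exact (equal_f (equal_f (f_equal snd E) l) a).
Qed.

(* [omegas l (- u)] acts as the inverse of [omegas l u]. *)
Lemma genSig_opp_congr u u' :
  genSig act u = genSig act u' -> genSig act (aneg u) = genSig act (aneg u').
Proof.
  intro E. apply Sig_ext; simpl; intros l a.
  - assert (Hl : forall a, act_dot act (omegas l u) a = act_dot act (omegas l u') a)
      by (intro; exact (equal_f (equal_f (f_equal fst E) l) _)).
    rewrite !(omegas_opp HB), <- (dact_dot_opp_cancel_r Hd HB (omegas l u') a) at 1.
    rewrite <- Hl, (dact_dot_opp_cancel_l Hd HB). reflexivity.
  - rewrite !(dact_op_opp_l Hd). f_equal. exact (equal_f (equal_f (f_equal snd E) l) a).
Qed.

End GeneratorData.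

Section DataOfBA.
Variables (C : CI) (A : alg C).

Lemma rep_data (s : BA A) : sigE (rep s) = proj1_sig s.
Proof. unfold rep. destruct (constructive_indefinite_description _ _) as [x Hx]. exact Hx. Qed.

Lemma BA_ext (s t : BA A) : proj1_sig s = proj1_sig t -> s = t.
Proof.
  destruct s as [s Hs], t as [t Ht]; simpl. intro E. subst. f_equal. apply proof_irrelevance.
Qed.

Lemma BA_add_data (s t : BA A) : proj1_sig (aadd s t) = addSig (proj1_sig s) (proj1_sig t).
Proof.
  change (addSig (sigE (rep s)) (sigE (rep t)) = addSig (proj1_sig s) (proj1_sig t)).
  rewrite !rep_data. reflexivity.
Qed.

Lemma BA_bin_data o (s t : BA A) :
  proj1_sig (abin o s t) = binSig o (proj1_sig s) (proj1_sig t).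
Proof.
  change (binSig o (sigE (rep s)) (sigE (rep t)) = binSig o (proj1_sig s) (proj1_sig t)).
  rewrite !rep_data. reflexivity.
Qed.

Lemma sigU_shift (x : Expr A) :
  (forall l l' a, fst (sigU l x) l' a = fst (sigU (l' ++ l) x) nil a) /\
  (forall l l' a, fst (negU l x) l' a = fst (negU (l' ++ l) x) nil a).
Proof.
  induction x as [B act HB Hd b| |x IHx y IHy|x IH|w x IH|o x IHx y IHy];
    split; intros l l' a; simpl; auto.
  - rewrite omegas_app. reflexivity.
  - rewrite omegas_app. reflexivity.
  - rewrite (proj1 IHy l l'), (proj1 IHx l l'). reflexivity.
  - rewrite (proj2 IHx l l'), (proj2 IHy l l'). reflexivity.
  - apply (proj2 IH).
  - apply (proj1 IH).
  - rewrite (proj1 IH), app_assoc. reflexivity.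
  - rewrite (proj2 IH), app_assoc. reflexivity.
Qed.

Lemma BA_un_data_fst w (s : BA A) l a :
  fst (proj1_sig (aun w s)) l a = fst (proj1_sig s) (l ++ [w]) a.
Proof.
  change (fst (sigU [w] (rep s)) l a = fst (proj1_sig s) (l ++ [w]) a).
  rewrite <- rep_data. unfold sigE.
  rewrite (proj1 (sigU_shift (rep s)) [w] l a), (proj1 (sigU_shift (rep s)) nil (l ++ [w]) a),
    app_nil_r.
  reflexivity.
Qed.

Lemma canon_dot_omegas l (s : BA A) a :
  act_dot (canon A) (omegas l s) a = fst (proj1_sig s) l a.
Proof.
  enough (H : forall m, fst (proj1_sig (omegas l s)) m a = fst (proj1_sig s) (m ++ l) a)
    by exact (H nil).
  induction l as [|w l IH]; intro m.
  - rewrite app_nil_r. reflexivity.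
  - change (omegas (w :: l) s) with (aun w (omegas l s)).
    rewrite BA_un_data_fst, IH, <- app_assoc. reflexivity.
Qed.

End DataOfBA.

Definition prod_alg (S : signature) (X Y : alg S) : alg S :=
  @Alg S (X * Y)%type (azero, azero)
    (fun p => (aneg (fst p), aneg (snd p)))
    (fun p q => (aadd (fst p) (fst q), aadd (snd p) (snd q)))
    (fun w p => (aun w (fst p), aun w (snd p)))
    (fun o p q => (abin o (fst p) (fst q), abin o (snd p) (snd q))).

Lemma teval_prod (S : signature) (X Y : alg S) v t :
  teval (prod_alg X Y) v t = (teval X (fun n => fst (v n)) t, teval Y (fun n => snd (v n)) t).
Proof. induction t; simpl; rewrite ?IHt, ?IHt1, ?IHt2; auto; destruct (v n); reflexivity. Qed.

Lemma prod_inC (C : CI) (X Y : alg C) : inC X -> inC Y -> inC (prod_alg X Y).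
Proof. intros HX HY e He v. rewrite !teval_prod. f_equal; [apply HX | apply HY]; exact He. Qed.

Definition conj_action {C : CI} (A : alg C) : action A A :=
  Action A A (fun b a => aadd (aadd b a) (aneg b)) (fun o b a => abin o b a).

(* The split extension [A × A] with [p = snd], [i a = (a, 0)], [s b = (b, b)]. *)
Lemma conj_action_derived (C : CI) (A : alg C) (HA : inC A) : derived (conj_action A).
Proof.
  exists (prod_alg A A). split; [exact (prod_inC HA HA)|].
  exists snd, (fun a => (a, azero)), (fun b => (b, b)).
  repeat split; intros; simpl;
    rewrite ?(opp_0 HA), ?(add_0_l HA), ?(un_0 HA), ?(bin_0_l HA), ?(add_0_r HA),
      ?(add_opp_diag_r HA), ?(bin_0_r HA);
    try reflexivity.
  - congruence.
  - destruct e as [e1 e2]; simpl in *; subst. exists e1. reflexivity.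
  - match goal with H : exists _, _ |- _ => destruct H as [a' E] end. subst. reflexivity.
Qed.

Definition genB {C : CI} {A B : alg C} (act : action B A) (HB : inC B) (Hd : derived act)
  (b : B) : BA A := mkB (egen act HB Hd b).
Arguments genB {C A B} act HB Hd b.

Section GeneratorsOfBA.
Variables (C : CI) (A B : alg C) (act : action B A).
Hypotheses (HB : inC B) (Hd : derived act).

Lemma genB_0 : genB act HB Hd azero = azero.
Proof. apply BA_ext. exact (genSig_0 HB Hd). Qed.

Lemma genB_add b b' : genB act HB Hd (aadd b b') = aadd (genB act HB Hd b) (genB act HB Hd b').
Proof. apply BA_ext. rewrite BA_add_data. exact (genSig_add HB Hd b b'). Qed.

Lemma genB_bin o b b' :
  genB act HB Hd (abin o b b') = abin o (genB act HB Hd b) (genB act HB Hd b').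
Proof. apply BA_ext. rewrite BA_bin_data. exact (genSig_bin Hd o b b'). Qed.

Lemma genB_action_map_canon :
  (forall b a, act_dot (canon A) (genB act HB Hd b) a = act_dot act b a) /\
  (forall o b a, act_op (canon A) o (genB act HB Hd b) a = act_op act o b a).
Proof. split; reflexivity. Qed.

End GeneratorsOfBA.

Definition dmap {C : CI} (A : alg C) (HA : inC A) : A -> BA A :=
  genB (conj_action A) HA (conj_action_derived HA).

Section SemidirectWithBA.
Variables (C : CI) (A : alg C).
Hypotheses (HA : inC A) (HS : inC (semidirect (canon A))).

Lemma canon_derived : derived (canon A).
Proof. apply (semidirect_derived HA HS); reflexivity. Qed.

Lemma BA_inC : inC (BA A).
Proof. exact (semidirect_inC_l HS). Qed.

Lemma BA_opp_data_fst (r : BA A) l a : fst (proj1_sig r) l (fst (proj1_sig (aneg r)) l a) = a.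
Proof.
  pose proof (f_equal (@proj1_sig _ _) (add_opp_diag_r BA_inC r)) as E.
  rewrite BA_add_data in E. exact (equal_f (equal_f (f_equal fst E) l) a).
Qed.

Lemma genB_morph (D : alg C) (actD : action D A) (HD : inC D) (Hd : derived actD) :
  morph (genB actD HD Hd).
Proof.
  repeat split; [exact (genB_0 HD Hd) | | exact (genB_add HD Hd) | | exact (genB_bin HD Hd)].
  - intro c. apply (opp_unique BA_inC).
    rewrite <- (genB_add HD Hd), (add_opp_diag_l HD), (genB_0 HD Hd). reflexivity.
  - intros w c. apply BA_ext, Sig_ext; intros l x.
    + rewrite BA_un_data_fst. simpl. rewrite omegas_app. reflexivity.
    + change (act_op actD l (aun w c) x = act_op (canon A) l (aun w (genB actD HD Hd c)) x).
      rewrite (dact_op_un_l canon_derived), (dact_op_un_l Hd). reflexivity.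
Qed.

Lemma dmap_dot r c :
  dmap HA (act_dot (canon A) r c) = aadd (aadd r (dmap HA c)) (aneg r).
Proof.
  apply BA_ext. rewrite !BA_add_data. apply Sig_ext; intros l x.
  - change (aadd (aadd (omegas l (act_dot (canon A) r c)) x)
                 (aneg (omegas l (act_dot (canon A) r c))) =
            fst (proj1_sig r) l
              (aadd (aadd (omegas l c) (fst (proj1_sig (aneg r)) l x)) (aneg (omegas l c)))).
    pose proof (BA_opp_data_fst r l x) as Hinv.
    rewrite <- (canon_dot_omegas l r) in Hinv |- *.
    rewrite !(dact_dot_add_r canon_derived), (dact_dot_opp_r canon_derived HA), Hinv,
      (dact_dot_omegas canon_derived), !(add_assoc HA).
    reflexivity.
  - change (abin l (act_dot (canon A) r c) x =
      aadd (aadd (act_op (canon A) l r x) (abin l c x)) (act_op (canon A) l (aneg r) x)).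
    rewrite (dact_dot_bin_l canon_derived), (dact_op_opp_l canon_derived),
      <- (dact_op_central canon_derived), (add_assoc HA), (add_opp_diag_r HA), (add_0_r HA).
    reflexivity.
Qed.

Lemma dmap_op_l o r c : dmap HA (act_op (canon A) o r c) = abin o r (dmap HA c).
Proof.
  apply BA_ext. rewrite BA_bin_data. apply Sig_ext; intros l x.
  - change (aadd (aadd (omegas l (act_op (canon A) o r c)) x)
                 (aneg (omegas l (act_op (canon A) o r c))) = x).
    rewrite (dact_op_omegas canon_derived). apply (dact_conj_op canon_derived).
  - apply (dact_bin_op_word_l canon_derived).
Qed.

Lemma dmap_op_r o c r : dmap HA (act_op (canon A) (flip C o) r c) = abin o (dmap HA c) r.
Proof.
  apply BA_ext. rewrite BA_bin_data. apply Sig_ext; intros l x.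
  - change (aadd (aadd (omegas l (act_op (canon A) (flip C o) r c)) x)
                 (aneg (omegas l (act_op (canon A) (flip C o) r c))) = x).
    rewrite (dact_op_omegas canon_derived). apply (dact_conj_op canon_derived).
  - apply (dact_bin_op_word_r canon_derived).
Qed.

Lemma xmod_dmap : xmod (dmap HA) (canon A).
Proof.
  split; [exact HA|]. split; [exact BA_inC|].
  split; [exact (genB_morph HA (conj_action_derived HA))|]. split; [exact canon_derived|].
  repeat split; [exact dmap_dot | exact dmap_op_l | exact dmap_op_r].
Qed.

(* An element of [BA A] is determined by how it and its [omegas]-images act. *)
Lemma action_map_canon_unique (D : alg C) (actD : action D A) (HD : inC D) (Hd : derived actD)
  (phi : D -> BA A) : action_map actD (canon A) phi -> phi = genB actD HD Hd.
Proof.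
  intros (Hm & Hdot & Hop). apply functional_extensionality; intro c.
  apply BA_ext, Sig_ext; intros l x.
  - rewrite <- canon_dot_omegas, <- (morph_omegas l c Hm). apply Hdot.
  - apply Hop.
Qed.

Lemma canon_universal (D : alg C) (actD : action D A) (HD : inC D) (Hd : derived actD) :
  exists! phi : D -> BA A, morph phi /\
    (forall c a, act_dot actD c a = act_dot (canon A) (phi c) a) /\
    (forall o c a, act_op actD o c a = act_op (canon A) o (phi c) a).
Proof.
  exists (genB actD HD Hd). split.
  - split; [exact (genB_morph HD Hd) | split; reflexivity].
  - intros phi (Hm & Hdot & Hop). symmetry.
    apply (action_map_canon_unique HD Hd). split; [exact Hm | split; intros; symmetry; auto].
Qed.

Lemma is_actor_dmap : is_actor (dmap HA) (canon A).
Proof. split; [exact xmod_dmap | exact canon_universal]. Qed.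

End SemidirectWithBA.

Lemma genSig_action_map {C : CI} (B B' A : alg C) (act : action B A) (act' : action B' A)
  (phi : B -> B') : action_map act act' phi -> forall b, genSig act' (phi b) = genSig act b.
Proof.
  intros (Hm & Hdot & Hop) b. apply Sig_ext; intros; simpl.
  - rewrite <- (morph_omegas _ _ Hm). apply Hdot.
  - apply Hop.
Qed.

Section ActorCoversBA.
Variables (C : CI) (A Act : alg C) (act' : action Act A).
Hypotheses (HAct : inC Act) (Hd' : derived act').
Variable U : forall (B : alg C) (act : action B A), inC B -> derived act -> B -> Act.
Hypothesis HU :
  forall B (act : action B A) (HB : inC B) (Hd : derived act), action_map act act' (U HB Hd).

Fixpoint eval_expr (x : Expr A) : Act :=
  match x with
  | egen _ HB Hd b => U HB Hd b
  | ezero => azero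
  | eadd x y => aadd (eval_expr x) (eval_expr y)
  | eneg x => aneg (eval_expr x)
  | eun w x => aun w (eval_expr x)
  | ebin o x y => abin o (eval_expr x) (eval_expr y)
  end.

Lemma eval_expr_data (x : Expr A) :
  forall l, sigU l x = genSig act' (omegas l (eval_expr x)) /\
            negU l x = genSig act' (omegas l (aneg (eval_expr x))).
Proof.
  induction x as [B act HB Hd b| |x IHx y IHy|x IH|w x IH|o x IHx y IHy]; intro l;
    cbn [sigU negU eval_expr].
  - pose proof (HU HB Hd) as Hphi. destruct (Hphi) as ((_ & HN & _) & _).
    rewrite <- HN, <- !(morph_omegas l _ (proj1 Hphi)), !(genSig_action_map Hphi).
    split; reflexivity.
  - rewrite (opp_0 HAct), (omegas_0 HAct), (genSig_0 HAct Hd'). split; reflexivity.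
  - rewrite (proj1 (IHx l)), (proj1 (IHy l)), (proj2 (IHx l)), (proj2 (IHy l)),
      (opp_add_distr HAct), !(omegas_add HAct), !(genSig_add HAct Hd').
    split; reflexivity.
  - rewrite (proj1 (IH l)), (proj2 (IH l)), (opp_involutive HAct). split; reflexivity.
  - rewrite (proj1 (IH (l ++ [w]))), (proj2 (IH (l ++ [w]))), !omegas_app.
    cbn [omegas fold_right]. rewrite (un_opp HAct). split; reflexivity.
  - rewrite (proj1 (IHx l)), (proj1 (IHy nil)), (omegas_opp HAct), (omegas_bin HAct),
      (genSig_opp_bin HAct Hd'), (genSig_bin Hd').
    split; reflexivity.
Qed.

Lemma genB_eval_rep (s : BA A) : genB act' HAct Hd' (eval_expr (rep s)) = s.
Proof.
  apply BA_ext. rewrite <- (rep_data s). symmetry. exact (proj1 (eval_expr_data (rep s) nil)).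
Qed.

Lemma genB_actor_morph : morph (genB act' HAct Hd').
Proof.
  assert (Hrep : forall y, genSig act' (eval_expr (rep (genB act' HAct Hd' y))) = genSig act' y)
    by (intro y; exact (f_equal (@proj1_sig _ _) (genB_eval_rep _))).
  repeat split;
    [exact (genB_0 HAct Hd') | | exact (genB_add HAct Hd') | | exact (genB_bin HAct Hd')].
  - intro y. apply BA_ext.
    change (genSig act' (aneg y) = negU nil (rep (genB act' HAct Hd' y))).
    rewrite (proj2 (eval_expr_data _ nil)). symmetry. apply (genSig_opp_congr HAct Hd'), Hrep.
  - intros w y. apply BA_ext.
    change (genSig act' (aun w y) = sigU [w] (rep (genB act' HAct Hd' y))).
    rewrite (proj1 (eval_expr_data _ [w])). symmetry. apply (genSig_un_congr Hd'), Hrep.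
Qed.

End ActorCoversBA.
Arguments eval_expr {C A Act} U x.

Lemma actor_semidirect_inC (C : CI) (A : alg C) : has_actor A -> inC (semidirect (canon A)).
Proof.
  intros (Act & d & act' & (_ & HAct & _ & Hd' & _) & Huniv).
  assert (Hchoice : forall (B : alg C) (act : action B A) (HB : inC B) (Hd : derived act),
             {phi : B -> Act | action_map act act' phi}).
  { intros B act HB Hd. apply constructive_indefinite_description.
    destruct (Huniv B act HB Hd) as [phi [(Hm & Hdot & Hop) _]].
    exists phi. split; [exact Hm | split; intros; symmetry; auto]. }
  set (U := fun B act HB Hd => proj1_sig (Hchoice B act HB Hd)).
  assert (HU : forall B act HB Hd, action_map act act' (U B act HB Hd))
    by (intros; apply proj2_sig).
  assert (Hmap : action_map act' (canon A) (genB act' HAct Hd'))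
    by exact (conj (genB_actor_morph HAct Hd' U HU) (genB_action_map_canon HAct Hd')).
  apply (inC_image (semidirect_map_morph Hmap)).
  - intros [s a]. exists (eval_expr U (rep s), a). simpl.
    rewrite (genB_eval_rep HAct Hd' U HU). reflexivity.
  - exact (derived_semidirect_inC Hd').
Qed.

Theorem theorem3p6 (C : CI) (A : alg C) (HA : inC A) :
  (has_actor A <-> inC (semidirect (canon A))) /\
  (inC (semidirect (canon A)) ->
     exists d : A -> BA A,
       (forall a, proj1_sig (d a) = dSig a) /\ is_actor d (canon A)).
Proof.
  split.
  - split; [exact (@actor_semidirect_inC C A) |].
    intro HS. exists (BA A), (dmap HA), (canon A). exact (is_actor_dmap HA HS).
  - intro HS. exists (dmap HA). split; [reflexivity | exact (is_actor_dmap HA HS)].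
Qed.
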